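(* Let $S=\{x_1,\dots,x_N\}$ satisfy A1, and let $\ell$ be differentiable with $\ell'<0$ everywhere. Let $B$ be a uniformly random subset of $S$ of size $b$. Then for every $w\in\mathbb{R}^d$, $$\|\nabla\mathcal{L}(w)\|^2\le\mathbb{E}_B\|\nabla\mathcal{L}_B(w)\|^2\le\frac{N\sigma_{\max}^2}{\gamma^2b}\|\nabla\mathcal{L}(w)\|^2.$$
   Context: Data $x_i\in\mathbb{R}^d$ (labels absorbed). $\mathcal{L}(w)=\frac1N\sum_i\ell(\langle w,x_i\rangle)$ and $\mathcal{L}_B(w)=\frac1b\sum_{x\in B}\ell(\langle w,x\rangle)$. $\sigma_{\max}$ is the spectral norm of the matrix $(x_1,\dots,x_N)$. A1: there is $w$ with $\langle w,x_i\rangle>0$ for all $i$. Max-margin: $\hat w=\arg\min\{\|w\|^2:\langle w,x_i\rangle\ge1\ \forall i\}$ and $\gamma=1/\|\hat w\|$. *)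

From HB Require Import structures.
From mathcomp Require Import all_boot all_order all_algebra.
From mathcomp Require Import all_classical all_reals.
From mathcomp Require Import topology normedtype derive.
Set Implicit Arguments. Unset Strict Implicit. Unset Printing Implicit Defensive.
Import Order.TTheory GRing.Theory Num.Theory numFieldNormedType.Exports.
Local Open Scope ring_scope.
Local Open Scope classical_set_scope.

Section Defs.
Variables (R : realType) (d N : nat).

Definition dotp (u v : 'rV[R]_d) : R := \sum_(k < d) u 0 k * v 0 k.
Definition enorm (u : 'rV[R]_d) : R := Num.sqrt (dotp u u).

(* A1: linear separability of the (label-absorbed) data. *)
Definition separable (x : 'I_N -> 'rV[R]_d) : Prop :=
  exists w, forall i, 0 < dotp w (x i).

Definition is_max_margin (x : 'I_N -> 'rV[R]_d) (wh : 'rV[R]_d) : Prop :=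
  (forall i, 1 <= dotp wh (x i)) /\
  (forall w, (forall i, 1 <= dotp w (x i)) -> enorm wh ^+ 2 <= enorm w ^+ 2).

(* spectral norm of the d x N matrix (x_1, ..., x_N):
   sup { || sum_i u_i x_i || : u in R^N, ||u|| <= 1 } *)
Definition sigma_max (x : 'I_N -> 'rV[R]_d) : R :=
  sup [set enorm (\sum_i u i *: x i) |
       u in [set u : 'I_N -> R | \sum_i u i ^+ 2 <= 1]].

(* gradient of L(w) = 1/N sum_i l(<w,x_i>) (chain rule) *)
Definition gradL (l : R -> R) (x : 'I_N -> 'rV[R]_d) (w : 'rV[R]_d) : 'rV[R]_d :=
  N%:R^-1 *: \sum_i (derive1 l (dotp w (x i)) *: x i).

(* gradient of L_B(w) = 1/b sum_{i in B} l(<w,x_i>), with b = |B| *)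
Definition gradLB (l : R -> R) (x : 'I_N -> 'rV[R]_d) (B : {set 'I_N})
  (w : 'rV[R]_d) : 'rV[R]_d :=
  (#|B|%:R)^-1 *: \sum_(i in B) (derive1 l (dotp w (x i)) *: x i).

Definition E_subset (b : nat) (f : {set 'I_N} -> R) : R :=
  (#|[set B : {set 'I_N} | #|B| == b]|%:R)^-1 *
  \sum_(B : {set 'I_N} | #|B| == b) f B.

End Defs.

(* Every index lies in the same number of b-subsets, so the minibatch
   gradient is an unbiased estimate of the full gradient, and Jensen's
   inequality gives the lower bound.  For the upper bound, the definition of
   sigma_max bounds |grad L_B|^2 by sigma^2/b^2 sum_(i in B) l'_i^2, which
   averages to sigma^2/(b N) sum_i l'_i^2.  As every l'_i is negative and
   <w^, x_i> >= 1, sum_i |l'_i| <= - sum_i l'_i <w^, x_i> = - N <w^, grad L>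
   <= N |w^| |grad L|, while sum_i l'_i^2 <= (sum_i |l'_i|)^2; finally
   |w^| = 1/gamma. *)

From HB Require Import structures.
From mathcomp Require Import all_boot all_order all_algebra perm.
From mathcomp Require Import all_classical all_reals.
From mathcomp Require Import topology normedtype derive.
From mathcomp Require Import ring.
Set Implicit Arguments.
Unset Strict Implicit.
Unset Printing Implicit Defensive.
Import Order.TTheory GRing.Theory Num.Theory numFieldNormedType.Exports.
Local Open Scope ring_scope.

Section SumInequalities.
Variables (R : realFieldType) (I : finType) (P : pred I).

Lemma sumr_CauchySchwarz (a c : I -> R) :
  (\sum_(i | P i) a i * c i) ^+ 2
    <= (\sum_(i | P i) a i ^+ 2) * \sum_(i | P i) c i ^+ 2.
Proof.
set A := \sum_(i | P i) a i ^+ 2; set C := \sum_(i | P i) c i ^+ 2.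
set Q := \sum_(i | P i) a i * c i.
have C_ge0 : 0 <= C by apply: sumr_ge0 => i _; exact: sqr_ge0.
have [C0 | C_neq0] := eqVneq C 0.
  have c0 i : P i -> c i = 0.
    move=> Pi; apply/eqP; rewrite -sqrf_eq0; apply/eqP.
    by apply: (psumr_eq0P _ C0) => // j _; exact: sqr_ge0.
  by rewrite /Q big1 ?expr0n ?C0 ?mulr0 // => i /c0->; rewrite mulr0.
have : 0 <= \sum_(i | P i) (C * a i - Q * c i) ^+ 2.
  by apply: sumr_ge0 => i _; exact: sqr_ge0.
have -> : \sum_(i | P i) (C * a i - Q * c i) ^+ 2 = C * (C * A - Q ^+ 2).
  rewrite (eq_bigr (fun i =>
    C ^+ 2 * a i ^+ 2 - 2 * C * Q * (a i * c i) + Q ^+ 2 * c i ^+ 2)); last first.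
    by move=> i _; ring.
  by rewrite !big_split /= sumrN -!mulr_sumr -/A -/Q -/C; ring.
by rewrite pmulr_rge0 ?lt_def ?C_neq0 // subr_ge0 mulrC.
Qed.

Lemma psumr_sqr_le (a : I -> R) : (forall i, P i -> 0 <= a i) ->
  \sum_(i | P i) a i ^+ 2 <= (\sum_(i | P i) a i) ^+ 2.
Proof.
move=> a_ge0; rewrite expr2 mulr_suml; apply: ler_sum => i Pi.
rewrite expr2 ler_wpM2l ?a_ge0 // (bigD1 i) //= lerDl.
by apply: sumr_ge0 => j /andP[Pj _]; exact: a_ge0.
Qed.

End SumInequalities.

Section FixedSizeSubsets.
Variables (T : finType) (b : nat).

Definition draws_with (i : T) := [set B : {set T} | #|B| == b & i \in B].

Lemma eq_card_draws_with (i j : T) : #|draws_with i| = #|draws_with j|.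
Proof.
pose swap (B : {set T}) := tperm i j @^-1: B.
have swapK : involutive swap by move=> B; apply/setP => z; rewrite !inE tpermK.
have -> : draws_with j = swap @^-1: draws_with i.
  apply/setP => B; rewrite !inE /swap card_preimset ?tpermL //; exact: perm_inj.
by rewrite card_preimset //; exact: inv_inj.
Qed.

Lemma sum_draws_mem (V : nmodType) (a : T -> V) :
  \sum_(B : {set T} | #|B| == b) \sum_(i in B) a i = \sum_i a i *+ #|draws_with i|.
Proof.
rewrite (exchange_big_dep xpredT) //=; apply: eq_bigr => i _.
by rewrite -sumr_const; apply: eq_bigl => B; rewrite inE.
Qed.

Lemma card_draws_with (i : T) : (#|T| * #|draws_with i| = b * 'C(#|T|, b))%N.
Proof.
have := sum_draws_mem (fun _ : T => 1%N).
rewrite (eq_bigr (fun _ => b)) => [|B /eqP <-]; last by rewrite sum1_card.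
rewrite sum_nat_const -cardsE card_draws.
under eq_bigr => j _ do rewrite natn (eq_card_draws_with j i).
by rewrite sum_nat_const mulnC => <-.
Qed.

Lemma sum_draws_mem_mulrn (V : nmodType) (a : T -> V) :
  (\sum_(B : {set T} | #|B| == b) \sum_(i in B) a i) *+ #|T|
    = (\sum_i a i) *+ (b * 'C(#|T|, b)).
Proof.
rewrite sum_draws_mem -!sumrMnl; apply: eq_bigr => i _.
by rewrite -mulrnA mulnC card_draws_with.
Qed.

End FixedSizeSubsets.

Section Euclidean.
Variables (R : realType) (d : nat).
Implicit Types (u v wh : 'rV[R]_d) (a : R).

Lemma dotpC u v : dotp u v = dotp v u.
Proof. by apply: eq_bigr => k _; rewrite mulrC. Qed.

Lemma dotp_ge0 u : 0 <= dotp u u.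
Proof. by apply: sumr_ge0 => k _; rewrite -expr2 sqr_ge0. Qed.

Lemma enorm_sqr u : enorm u ^+ 2 = dotp u u.
Proof. by rewrite sqr_sqrtr ?dotp_ge0. Qed.

Lemma enorm_ge0 u : 0 <= enorm u.
Proof. exact: sqrtr_ge0. Qed.

Lemma dotpZr a u v : dotp u (a *: v) = a * dotp u v.
Proof. by rewrite /dotp mulr_sumr; apply: eq_bigr => k _; rewrite mxE mulrCA. Qed.

Lemma dotpZl a u v : dotp (a *: u) v = a * dotp u v.
Proof. by rewrite dotpC dotpZr dotpC. Qed.

Lemma dotp_sumr (I : Type) (r : seq I) (P : pred I) (F : I -> 'rV[R]_d) u :
  dotp u (\sum_(i <- r | P i) F i) = \sum_(i <- r | P i) dotp u (F i).
Proof.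
rewrite /dotp [RHS]exchange_big; apply: eq_bigr => k _ /=.
by rewrite summxE mulr_sumr.
Qed.

Lemma enormZ a u : enorm (a *: u) = `|a| * enorm u.
Proof. by rewrite /enorm dotpZl dotpZr mulrA -expr2 sqrtrM ?sqr_ge0 ?sqrtr_sqr. Qed.

Lemma dotp_CauchySchwarz u v : dotp u v ^+ 2 <= dotp u u * dotp v v.
Proof.
have dotp_sqr w : dotp w w = \sum_k w 0 k ^+ 2 by apply: eq_bigr => k _.
by rewrite !dotp_sqr; exact: sumr_CauchySchwarz.
Qed.

Lemma margin_sum_sqr_le (I : finType) (c : I -> R) (x : I -> 'rV[R]_d) wh :
  (forall i, c i <= 0) -> (forall i, 1 <= dotp wh (x i)) ->
  \sum_i c i ^+ 2 <= dotp wh wh * dotp (\sum_i c i *: x i) (\sum_i c i *: x i).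
Proof.
move=> c_le0 margin.
have oppc_ge0 i : 0 <= - c i by rewrite oppr_ge0.
have sum_le : \sum_i - c i <= - dotp wh (\sum_i c i *: x i).
  rewrite dotp_sumr -sumrN; apply: ler_sum => i _.
  by rewrite dotpZr -mulNr -{1}[- c i]mulr1 ler_wpM2l.
under eq_bigr do rewrite -sqrrN.
apply: le_trans (psumr_sqr_le (a := fun i => - c i) (fun i _ => oppc_ge0 i)) _.
apply: le_trans (dotp_CauchySchwarz wh _); rewrite -(sqrrN (dotp wh _)).
have sum_ge0 : 0 <= \sum_i - c i by exact: sumr_ge0.
by rewrite ler_sqr ?nnegrE // (le_trans sum_ge0 sum_le).
Qed.

End Euclidean.

Section SpectralNorm.
Variables (R : realType) (d N : nat) (x : 'I_N -> 'rV[R]_d).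

Lemma comb_coord (u : 'I_N -> R) k :
  (\sum_i u i *: x i) 0 k = \sum_i u i * x i 0 k.
Proof. by rewrite summxE; apply: eq_bigr => i _; rewrite mxE. Qed.

Lemma sigma_max_ub (u : 'I_N -> R) : \sum_i u i ^+ 2 <= 1 ->
  enorm (\sum_i u i *: x i) <= sigma_max x.
Proof.
move=> u_le1; apply: sup_upper_bound; last by exists u.
split; first by exists (enorm (\sum_i u i *: x i)), u.
exists (Num.sqrt (\sum_k (\sum_i `|x i 0 k|) ^+ 2)) => _ [v /= v_le1 <-].
rewrite ler_sqrt; last by apply: sumr_ge0 => k _; exact: sqr_ge0.
apply: ler_sum => k _; rewrite -expr2 -real_normK ?num_real //.
rewrite ler_sqr ?nnegrE ?sumr_ge0 // comb_coord.
apply: le_trans (ler_norm_sum _ _ _) _; apply: ler_sum => i _.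
rewrite normrM ler_piMl // -(expr_le1 (n := 2)) // real_normK ?num_real //.
apply: le_trans v_le1; rewrite (bigD1 i) //= lerDl.
by apply: sumr_ge0 => j _; exact: sqr_ge0.
Qed.

Lemma enorm_comb_sqr_le (u : 'I_N -> R) :
  enorm (\sum_i u i *: x i) ^+ 2 <= sigma_max x ^+ 2 * \sum_i u i ^+ 2.
Proof.
set s := \sum_i u i ^+ 2.
have s_ge0 : 0 <= s by apply: sumr_ge0 => i _; exact: sqr_ge0.
have [s0 | s_neq0] := eqVneq s 0.
  have u0 i : u i = 0.
    apply/eqP; rewrite -sqrf_eq0; apply/eqP.
    by apply: (psumr_eq0P _ s0) => // j _; exact: sqr_ge0.
  rewrite s0 mulr0 big1 => [|i _]; last by rewrite u0 scale0r.
  by rewrite -(scale0r (0 : 'rV[R]_d)) enormZ normr0 mul0r expr0n.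
set t := Num.sqrt s.
have t_gt0 : 0 < t by rewrite sqrtr_gt0 lt_def s_neq0.
have : enorm (\sum_i (u i / t) *: x i) <= sigma_max x.
  apply: sigma_max_ub; under eq_bigr do rewrite expr_div_n.
  by rewrite -mulr_suml sqr_sqrtr // divff.
rewrite (_ : \sum_i _ *: x i = t^-1 *: \sum_i u i *: x i); last first.
  by rewrite scaler_sumr; apply: eq_bigr => i _; rewrite scalerA mulrC.
rewrite enormZ ger0_norm ?invr_ge0 ?(ltW t_gt0) // ler_pdivrMl // => le_sigma.
have sigma_ge0 : 0 <= sigma_max x.
  by rewrite -(pmulr_rge0 _ t_gt0) (le_trans (enorm_ge0 _) le_sigma).
rewrite -[s]sqr_sqrtr // -exprMn ler_sqr ?nnegrE ?enorm_ge0 ?mulr_ge0 ?sqrtr_ge0 //.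
by rewrite mulrC.
Qed.

End SpectralNorm.

Section UniformSubsetMean.
Variables (R : realType) (N b : nat).
Implicit Types (f g : {set 'I_N} -> R).

Lemma E_subsetE f :
  E_subset b f = 'C(N, b)%:R^-1 * \sum_(B : {set 'I_N} | #|B| == b) f B.
Proof.
rewrite /E_subset -[in 'C(N, b)](card_ord N) -card_draws.
congr ((_%:R)^-1 * _); apply: eq_card => B.
by rewrite inE; apply/idP/idP; rewrite in_setE.
Qed.

Lemma eq_E_subset f g : (forall B : {set 'I_N}, #|B| = b -> f B = g B) ->
  E_subset b f = E_subset b g.
Proof.
move=> fg; rewrite !E_subsetE; congr (_ * _).
by apply: eq_bigr => B /eqP; exact: fg.
Qed.

Lemma ler_E_subset f g : (forall B : {set 'I_N}, #|B| = b -> f B <= g B) ->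
  E_subset b f <= E_subset b g.
Proof.
move=> fg; rewrite !E_subsetE ler_wpM2l ?invr_ge0 ?ler0n //.
by apply: ler_sum => B /eqP; exact: fg.
Qed.

Lemma E_subsetZ a f : E_subset b (fun B => a * f B) = a * E_subset b f.
Proof. by rewrite !E_subsetE -mulr_sumr mulrCA. Qed.

Lemma E_subset_sum (I : finType) (F : I -> {set 'I_N} -> R) :
  E_subset b (fun B => \sum_i F i B) = \sum_i E_subset b (F i).
Proof.
under [RHS]eq_bigr do rewrite E_subsetE.
by rewrite E_subsetE -mulr_sumr exchange_big.
Qed.

Lemma E_subset_sqr_le f : E_subset b f ^+ 2 <= E_subset b (fun B => f B ^+ 2).
Proof.
rewrite !E_subsetE; set C := 'C(N, b)%:R.
have [C0 | C_neq0] := eqVneq C 0; first by rewrite C0 invr0 !mul0r expr0n.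
have := sumr_CauchySchwarz (fun B : {set 'I_N} => #|B| == b) (fun => 1) f.
under eq_bigr do rewrite mul1r.
rewrite expr1n sumr_const -cardsE card_draws card_ord -/C => CS.
rewrite exprMn (le_trans (ler_wpM2l _ CS)) ?sqr_ge0 //.
by rewrite mulrA expr2 -(mulrA C^-1) mulVf ?mulr1.
Qed.

Lemma E_subset_sum_mem (a : 'I_N -> R) : (0 < N)%N -> (b <= N)%N ->
  E_subset b (fun B => \sum_(i in B) a i) = b%:R / N%:R * \sum_i a i.
Proof.
move=> N_gt0 b_le_N; rewrite E_subsetE.
have N_neq0 : (N%:R : R) != 0 by rewrite pnatr_eq0 -lt0n.
have C_neq0 : ('C(N, b)%:R : R) != 0 by rewrite pnatr_eq0 -lt0n bin_gt0.
have := sum_draws_mem_mulrn b a; rewrite card_ord => count.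
apply: (mulIf N_neq0); rewrite -[LHS]mulrA mulr_natr count.
by rewrite -(mulr_natr (\sum_i a i)) natrM; field; rewrite N_neq0.
Qed.

Lemma E_subset_enorm_sqr_ge d (F : {set 'I_N} -> 'rV[R]_d) (g : 'rV[R]_d) :
  (forall k, E_subset b (fun B => F B 0 k) = g 0 k) ->
  enorm g ^+ 2 <= E_subset b (fun B => enorm (F B) ^+ 2).
Proof.
move=> Fg; rewrite enorm_sqr.
have -> : E_subset b (fun B => enorm (F B) ^+ 2)
          = \sum_k E_subset b (fun B => F B 0 k ^+ 2).
  rewrite -E_subset_sum; apply: eq_E_subset => B _.
  by rewrite enorm_sqr; apply: eq_bigr => k _; rewrite expr2.
by apply: ler_sum => k _; rewrite -expr2 -Fg; exact: E_subset_sqr_le.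
Qed.

End UniformSubsetMean.

Section MinibatchGradient.
Variables (R : realType) (d N : nat) (l : R -> R) (x : 'I_N -> 'rV[R]_d).
Variable w : 'rV[R]_d.
Local Notation c i := (derive1 l (dotp w (x i))).

Lemma sum_derive1_sqr_le (wh : 'rV[R]_d) : (0 < N)%N ->
  (forall t, derive1 l t <= 0) -> (forall i, 1 <= dotp wh (x i)) ->
  \sum_i c i ^+ 2 <= N%:R ^+ 2 * enorm wh ^+ 2 * enorm (gradL l x w) ^+ 2.
Proof.
move=> N_gt0 l'_le0 margin.
have N_neq0 : (N%:R : R) != 0 by rewrite pnatr_eq0 -lt0n.
apply: le_trans (margin_sum_sqr_le (fun i => l'_le0 _) margin) _.
rewrite !enorm_sqr /gradL dotpZl dotpZr.
set v := \sum_i c i *: x i.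
by rewrite [X in _ <= X](_ : _ = dotp wh wh * dotp v v) //; field.
Qed.

Variable b : nat.
Hypotheses (b_gt0 : (0 < b)%N) (b_le_N : (b <= N)%N).

Lemma E_subset_gradLB k : E_subset b (fun B => gradLB l x B w 0 k) = gradL l x w 0 k.
Proof.
have N_gt0 : (0 < N)%N := leq_trans b_gt0 b_le_N.
have N_neq0 : (N%:R : R) != 0 by rewrite pnatr_eq0 -lt0n.
have b_neq0 : (b%:R : R) != 0 by rewrite pnatr_eq0 -lt0n.
rewrite (eq_E_subset (g := fun B => b%:R^-1 * \sum_(i in B) c i * x i 0 k)); last first.
  move=> B Bb; rewrite /gradLB Bb mxE summxE; congr (_ * _).
  by apply: eq_bigr => i _; rewrite mxE.
rewrite E_subsetZ E_subset_sum_mem // /gradL mxE comb_coord.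
by field; rewrite N_neq0.
Qed.

Lemma E_subset_enorm_gradLB_le :
  E_subset b (fun B => enorm (gradLB l x B w) ^+ 2)
    <= sigma_max x ^+ 2 / (b%:R * N%:R) * \sum_i c i ^+ 2.
Proof.
have N_gt0 : (0 < N)%N := leq_trans b_gt0 b_le_N.
have N_neq0 : (N%:R : R) != 0 by rewrite pnatr_eq0 -lt0n.
have b_neq0 : (b%:R : R) != 0 by rewrite pnatr_eq0 -lt0n.
pose u (B : {set 'I_N}) i : R := if i \in B then c i else 0.
have sum_u (B : {set 'I_N}) : \sum_(i in B) c i *: x i = \sum_i u B i *: x i.
  by rewrite big_mkcond; apply: eq_bigr => i _; rewrite /u; case: ifP; rewrite ?scale0r.
have sum_u_sqr (B : {set 'I_N}) : \sum_(i in B) c i ^+ 2 = \sum_i u B i ^+ 2.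
  by rewrite big_mkcond; apply: eq_bigr => i _; rewrite /u; case: ifP; rewrite ?expr0n.
apply: le_trans (ler_E_subset
  (g := fun B => (b%:R^-1) ^+ 2 * (sigma_max x ^+ 2 * \sum_(i in B) c i ^+ 2)) _) _.
  move=> B Bb; rewrite /gradLB Bb sum_u enormZ exprMn ger0_norm ?invr_ge0 ?ler0n //.
  by rewrite ler_wpM2l ?sqr_ge0 // sum_u_sqr enorm_comb_sqr_le.
rewrite E_subsetZ E_subsetZ E_subset_sum_mem //.
by rewrite le_eqVlt; apply/orP; left; apply/eqP; field; rewrite N_neq0.
Qed.

End MinibatchGradient.

Theorem mainTheorem14 (R : realType) (d N b : nat)
  (x : 'I_N -> 'rV[R]_d) (l : R -> R) (wh : 'rV[R]_d)
  (hA1 : separable x)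
  (hdiff : forall t : R, derivable l t 1)
  (hneg : forall t : R, derive1 l t < 0)
  (hb : (0 < b)%N) (hbN : (b <= N)%N)
  (hwh : is_max_margin x wh) :
  let gamma := (enorm wh)^-1 in
  forall w : 'rV[R]_d,
    enorm (gradL l x w) ^+ 2 <= E_subset b (fun B => enorm (gradLB l x B w) ^+ 2)
    /\ E_subset b (fun B => enorm (gradLB l x B w) ^+ 2)
       <= (N%:R * sigma_max x ^+ 2) / (gamma ^+ 2 * b%:R) * enorm (gradL l x w) ^+ 2.
Proof.
(* [hA1] is implied by [hwh], and [derive1] is total: [hA1], [hdiff] are unused. *)
move=> gamma w; have N_gt0 := leq_trans hb hbN.
split; first exact: E_subset_enorm_sqr_ge (E_subset_gradLB _ _ _ hb hbN).
apply: le_trans (E_subset_enorm_gradLB_le _ _ _ hb hbN) _.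
have := sum_derive1_sqr_le w N_gt0 (fun t => ltW (hneg t)) hwh.1.
rewrite /gamma exprVn (invfM (enorm wh ^- 2)) invrK => margin.
apply: le_trans (ler_wpM2l _ margin) _.
  by rewrite mulr_ge0 ?sqr_ge0 ?invr_ge0 ?mulr_ge0 ?ler0n.
have N_neq0 : (N%:R : R) != 0 by rewrite pnatr_eq0 -lt0n.
have b_neq0 : (b%:R : R) != 0 by rewrite pnatr_eq0 -lt0n.
by rewrite le_eqVlt; apply/orP; left; apply/eqP; field; rewrite b_neq0 N_neq0.
Qed.
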